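(* For all $n\in\mathbb{N}$, $a_{n,1-n}=a_{n,n-1}=0$, and for all $j\in\mathbb{N}$, $a_{2j,1}=a_{2j,-1}=0$. Equivalently, the generating functions $A_k(x)=\sum_{n\ge\lfloor (k+1)/2\rfloor}\Theta^na_{n,k-n}x^n$ satisfy $A_{2j-1}\equiv0$ for all $j\in\mathbb{N}$.
   Context: Let $\varepsilon\in\{\pm1\}$, $b\in\mathbb{R}\setminus\{0\}$, $a\in\mathbb{C}$, and consider the degenerate third Painlevé equation $u''=\frac{(u')^2}{u}-\frac{u'}{\tau}+\frac1\tau(-8\varepsilon u^2+2ab)+\frac{b^2}{u}$. Put $\theta(\tau)=3^{3/2}(\varepsilon b)^{1/3}\tau^{2/3}$, $\Theta=3^{3/4}(\varepsilon b)^{1/6}$ (so $\theta=\Theta^2\tau^{2/3}$) and $\alpha=2i\sqrt3\,a$. Let $\varkappa\in\mathbb{C}$ with $|\mathrm{Re}\,\varkappa|<1/2$ and $w=\tau^{2\varkappa/3}e^{i\theta(\tau)}$. Consider the (general-solution) asymptotic expansion $$u(\tau)=\frac{\varepsilon(\varepsilon b)^{2/3}}{2}\tau^{1/3}\Big(1+\sum_{k=1}^{\infty}\tau^{-k/3}\sum_{j=-k}^{k}a_{k,j}w^j\Big),\qquad \mathrm{Re}\,\tau\to+\infty,\ |\mathrm{Im}\,\theta(\tau)|<\delta,$$ where $a_{1,0}=0$, $a_{1,1}a_{1,-1}=-\dfrac{i\varkappa}{\sqrt3(\varepsilon b)^{1/3}}$ (equivalently $\Theta^2a_{1,1}a_{1,-1}=-3i\varkappa$),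 and all remaining coefficients $a_{k,j}$ are uniquely determined by $a_{1,1},a_{1,-1},a,b,\varepsilon$ via formal substitution of the expansion into the equation; set $a_{0,0}=1$. *)

From HB Require Import structures.
From mathcomp Require Import all_boot all_order all_algebra.
From mathcomp Require Import complex.
Set Implicit Arguments. Unset Strict Implicit. Unset Printing Implicit Defensive.
Import Order.TTheory GRing.Theory Num.Theory.
Local Open Scope ring_scope.
Local Open Scope complex_scope.

(* A formal series  sum_{k,j} s k j * x^k * w^j  with x = tau^(-1/3),
   w = tau^(2 kappa/3) e^(i theta), stored by its coefficients. *)
Definition fseries (R : rcfType) := int -> int -> R[i].

Section Formal.
Variable R : rcfType.
Local Notation C := R[i].

(* Theta^2 = 3^(3/2) (eps b)^(1/3); beta := (eps b)^(1/3) (real cube root). *)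
Definition Theta2 (beta : R) : C := ((3 * Num.sqrt 3 * beta)%R)%:C.

Definition vser (a : nat -> int -> C) : fseries R :=
  fun k j => match k with Posz n => a n j | Negz _ => 0 end.

(* E = tau d/dtau + 1/3, acting on formal series:
   E (x^k w^j) = (1/3 - k/3 + 2 kappa j/3) x^k w^j + (2 i Theta^2 j/3) x^(k-2) w^j. *)
Definition Eop (kappa : C) (beta : R) (s : fseries R) : fseries R :=
  fun k j => (1 / 3 - k%:~R / 3 + 2 * kappa * j%:~R / 3) * s k j
           + (2 * 'i * Theta2 beta * j%:~R / 3) * s (k + 2) j.

(* Cauchy product of formal series supported in {k >= -8, |j| <= k + 8}. *)
Definition bandL : int := 8.
Definition fmul (s t : fseries R) : fseries R :=
  fun k j =>
    let M := (`|k| + 2 * bandL)%R in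
    \sum_(p < absz (k + 2 * bandL + 1))
      \sum_(q < absz (2 * M + 1))
        s (p%:Z - bandL) (q%:Z - M) * t (k - (p%:Z - bandL)) (j - (q%:Z - M)).

(* Formal substitution of u = eps (eps b)^(2/3)/2 * tau^(1/3) * v into
   u'' = u'^2/u - u'/tau + (-8 eps u^2 + 2ab)/tau + b^2/u.
   Multiplying by tau^2 u, dividing by (eps (eps b)^(2/3)/2)^2 tau^(2/3) and by
   tau^(4/3) gives the equivalent formal identity
     x^4 (v E^2 v - (E v)^2) + 4 beta^2 (v^3 - 1) - 4 a beta x^2 v = 0. *)
Definition formal_solution (a : C) (beta : R) (kappa : C)
    (coef : nat -> int -> C) : Prop :=
  let v := vser coef in
  let Ev := Eop kappa beta v in
  forall k j : int,
    (fmul v (Eop kappa beta Ev) (k - 4) j - fmul Ev Ev (k - 4) j)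
    + 4 * (beta ^+ 2)%:C * (fmul (fmul v v) v k j - (if (k == 0) && (j == 0) then 1 else 0))
    - 4 * a * beta%:C * v (k - 2) j = 0.

End Formal.

(* Split v into its even and odd parts with respect to the parity of k + j: the
   operator E and the Cauchy product respect this grading, and the odd part o
   starts at order 2 because a_{1,0} = 0.  Suppose o vanishes below order m >= 2.
   The odd-parity coefficients of the equation at orders m, m + 1, m + 2 are then
   linear in o and see v only through its coefficients of order <= 2.  At order m
   they read (4/9) u^2 (j^2 - 1) o_{m,j} = 0 with u = i Theta^2, so only o_{m,+-1}
   survive.  At orders m + 1 (j = 0, +-2) and m + 2 (j = +-1), using the order-2
   relations 3 a_{2,+-2} = a_{1,+-1}^2 and u a_{1,1} a_{1,-1} = 3 kappa, they give a
   2x2 linear system for o_{m,+-1} with determinant -(16/81) u^2 (m - 1)^2 != 0.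
   Hence o = 0, i.e. a_{n,j} = 0 whenever n + j is odd. *)

From HB Require Import structures.
From mathcomp Require Import all_boot all_order all_algebra.
From mathcomp Require Import complex.
From mathcomp Require Import zify ring lra.
From Stdlib Require Import FunctionalExtensionality.
Set Implicit Arguments. Unset Strict Implicit. Unset Printing Implicit Defensive.
Import Order.TTheory GRing.Theory Num.Theory.
Local Open Scope ring_scope.
Local Open Scope complex_scope.

Definition evenz (z : int) : bool := (z %% 2)%Z == 0.

Section SeriesAlgebra.
Variable R : rcfType.
Local Notation series := (fseries R).
Implicit Types (s t : series) (k j m c : int).

(* Locked, so that rewriting with [EopD] cannot unfold an arbitrary series into a sum. *)
Fact fadd_key : unit. Proof. exact: tt. Qed.
Definition fadd : series -> series -> series :=
  locked_with fadd_key (fun s t k j => s k j + t k j).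

Lemma faddE s t k j : fadd s t k j = s k j + t k j.
Proof. by rewrite /fadd unlock. Qed.

Lemma fmulDl s1 s2 t : fmul (fadd s1 s2) t = fadd (fmul s1 t) (fmul s2 t).
Proof.
apply: functional_extensionality => k; apply: functional_extensionality => j.
rewrite faddE /fmul -big_split /=; apply: eq_bigr => p _.
by rewrite -big_split /=; apply: eq_bigr => q _; rewrite faddE; exact: mulrDl.
Qed.

Lemma fmulDr s t1 t2 : fmul s (fadd t1 t2) = fadd (fmul s t1) (fmul s t2).
Proof.
apply: functional_extensionality => k; apply: functional_extensionality => j.
rewrite faddE /fmul -big_split /=; apply: eq_bigr => p _.
by rewrite -big_split /=; apply: eq_bigr => q _; rewrite faddE; exact: mulrDr.
Qed.

Lemma EopD kappa beta s t :
  Eop kappa beta (fadd s t) = fadd (Eop kappa beta s) (Eop kappa beta t).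
Proof.
apply: functional_extensionality => k; apply: functional_extensionality => j.
rewrite /Eop !faddE; ring.
Qed.

Lemma fmul_eq0 s t k j :
  (forall p q, s p q * t (k - p) (j - q) = 0) -> fmul s t k j = 0.
Proof. by move=> H; rewrite /fmul big1 // => p _; rewrite big1 // => q _. Qed.

Lemma eq_fmull s s' t k j :
  (forall p q, s p q = s' p q \/ t (k - p) (j - q) = 0) ->
  fmul s t k j = fmul s' t k j.
Proof.
move=> H; rewrite /fmul; apply: eq_bigr => p _; apply: eq_bigr => q _.
by case: (H (p%:Z - bandL) (q%:Z - (`|k| + 2 * bandL))) => ->; rewrite ?mulr0.
Qed.

Lemma eq_fmulr s t t' k j :
  (forall p q, t (k - p) (j - q) = t' (k - p) (j - q) \/ s p q = 0) ->
  fmul s t k j = fmul s t' k j.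
Proof.
move=> H; rewrite /fmul; apply: eq_bigr => p _; apply: eq_bigr => q _.
by case: (H (p%:Z - bandL) (q%:Z - (`|k| + 2 * bandL))) => ->; rewrite ?mul0r.
Qed.

Lemma fmul_seq s t k j (L : seq (int * int)) :
  uniq L ->
  all (fun x : int * int => (-8 <= x.1 <= k + 8) && (- (`|k| + 16) <= x.2 <= `|k| + 16)) L ->
  (forall p q, (p, q) \notin L -> s p q * t (k - p) (j - q) = 0) ->
  fmul s t k j = \sum_(x <- L) s x.1 x.2 * t (k - x.1) (j - x.2).
Proof.
move=> uL aL H; rewrite /fmul /bandL.
set M := (`|k| + 2 * 8)%R.
set f := fun x : int * int => s x.1 x.2 * t (k - x.1) (j - x.2).
set P := absz (k + 2 * 8 + 1); set Q := absz (2 * M + 1).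
pose G := [seq ((p%:Z - 8), (q%:Z - M)) | p <- iota 0 P, q <- iota 0 Q].
have -> : \sum_(p < P) \sum_(q < Q) s (p%:Z - 8) (q%:Z - M) * t (k - (p%:Z - 8)) (j - (q%:Z - M))
    = \sum_(x <- G) f x.
  rewrite big_allpairs_dep /=.
  have iotaE N : iota 0 N = index_iota 0 N by rewrite /index_iota subn0.
  rewrite iotaE big_mkord; apply: eq_bigr => p _.
  by rewrite iotaE big_mkord.
rewrite (bigID (fun x => x \in L)) /= [X in _ + X]big1 ?addr0; last first.
  by move=> [p q] /= /H.
rewrite -big_filter; apply: perm_big; apply: uniq_perm => //.
- rewrite filter_uniq //; apply: allpairs_uniq; rewrite ?iota_uniq //.
  by move=> [a b] [c d] _ _ /= [] h1 h2; congr (_, _); lia.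
- move=> [x y]; rewrite mem_filter; apply/andP/idP => [[]//|Hx]; split => //.
  move/allP: aL => /(_ _ Hx) /= Hb.
  apply/allpairsP; exists (absz (x + 8), absz (y + M)); rewrite /= !mem_iota.
  by split; [lia|lia|congr (_, _); rewrite /M; lia].
Qed.

Lemma fmul_boxl s t k j (A B : seq int) :
  uniq A -> uniq B ->
  all (fun a => -8 <= a <= k + 8) A ->
  all (fun b => - (`|k| + 16) <= b <= `|k| + 16) B ->
  (forall p q, ~~ ((p \in A) && (q \in B)) -> s p q * t (k - p) (j - q) = 0) ->
  fmul s t k j = \sum_(a <- A) \sum_(b <- B) s a b * t (k - a) (j - b).
Proof.
move=> uA uB aA aB H.
rewrite (@fmul_seq _ _ _ _ [seq (a, b) | a <- A, b <- B]).
- by rewrite big_allpairs_dep.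
- by apply: allpairs_uniq => // [[a b] [c d]] _ _ /= [-> ->].
- apply/allP => x /allpairsP [[a b] /= [ha hb ->]] /=.
  by rewrite (allP aA _ ha) (allP aB _ hb).
- move=> p q Hn; apply: H; apply: contra Hn => /andP [hp hq].
  by apply/allpairsP; exists (p, q).
Qed.

Lemma fmul_boxr s t k j (A B : seq int) :
  uniq A -> uniq B ->
  all (fun a => -8 <= k - a <= k + 8) A ->
  all (fun b => - (`|k| + 16) <= j - b <= `|k| + 16) B ->
  (forall p q, ~~ ((k - p \in A) && (j - q \in B)) -> s p q * t (k - p) (j - q) = 0) ->
  fmul s t k j = \sum_(a <- A) \sum_(b <- B) s (k - a) (j - b) * t a b.
Proof.
move=> uA uB aA aB H.
rewrite (@fmul_seq _ _ _ _ [seq (k - a, j - b) | a <- A, b <- B]).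
- rewrite big_allpairs_dep; apply: eq_bigr => a _; apply: eq_bigr => b _ /=.
  by rewrite !subKr.
- by apply: allpairs_uniq => // [[a b] [c d]] _ _ /= [h1 h2]; congr (_, _); lia.
- apply/allP => x /allpairsP [[a b] /= [ha hb ->]] /=.
  by rewrite (allP aA _ ha) (allP aB _ hb).
- move=> p q Hn; apply: H; apply: contra Hn => /andP [hp hq].
  by apply/allpairsP; exists (k - p, j - q); split => //=; congr (_, _); lia.
Qed.

Definition even_series s := forall k j, ~~ evenz (k + j) -> s k j = 0.
Definition odd_series s := forall k j, evenz (k + j) -> s k j = 0.

Lemma fmul_even s t : even_series s -> even_series t -> even_series (fmul s t).
Proof.
move=> hs ht k j hkj; apply: fmul_eq0 => p q.
have [h|h] := boolP (evenz (p + q)); last by rewrite hs ?mul0r.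
by rewrite ht ?mulr0 //; move: h hkj; rewrite /evenz; lia.
Qed.

Lemma fmul_even_odd s t : even_series s -> odd_series t -> odd_series (fmul s t).
Proof.
move=> hs ht k j hkj; apply: fmul_eq0 => p q.
have [h|h] := boolP (evenz (p + q)); last by rewrite hs ?mul0r.
by rewrite ht ?mulr0 //; move: h hkj; rewrite /evenz; lia.
Qed.

Lemma fmul_odd_even s t : odd_series s -> even_series t -> odd_series (fmul s t).
Proof.
move=> hs ht k j hkj; apply: fmul_eq0 => p q.
have [h|h] := boolP (evenz (p + q)); first by rewrite hs ?mul0r.
by rewrite ht ?mulr0 //; move: h hkj; rewrite /evenz; lia.
Qed.

Lemma fmul_odd s t : odd_series s -> odd_series t -> even_series (fmul s t).
Proof.
move=> hs ht k j hkj; apply: fmul_eq0 => p q.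
have [h|h] := boolP (evenz (p + q)); first by rewrite hs ?mul0r.
by rewrite ht ?mulr0 //; move: h hkj; rewrite /evenz; lia.
Qed.

Lemma Eop_even kappa beta s : even_series s -> even_series (Eop kappa beta s).
Proof.
by move=> hs k j h; rewrite /Eop !hs ?mulr0 ?addr0 //; move: h; rewrite /evenz; lia.
Qed.

Lemma Eop_odd kappa beta s : odd_series s -> odd_series (Eop kappa beta s).
Proof.
by move=> hs k j h; rewrite /Eop !hs ?mulr0 ?addr0 //; move: h; rewrite /evenz; lia.
Qed.

Definition even_part s : series := fun k j => if evenz (k + j) then s k j else 0.
Definition odd_part s : series := fun k j => if evenz (k + j) then 0 else s k j.

Lemma even_part_even s : even_series (even_part s).
Proof. by move=> k j h; rewrite /even_part (negbTE h). Qed.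

Lemma odd_part_odd s : odd_series (odd_part s).
Proof. by move=> k j h; rewrite /odd_part h. Qed.

Lemma fadd_even_odd_part s : fadd (even_part s) (odd_part s) = s.
Proof.
apply: functional_extensionality => k; apply: functional_extensionality => j.
by rewrite faddE /even_part /odd_part; case: evenz; rewrite ?addr0 ?add0r.
Qed.

Definition vanish_below s m := forall k j, k < m -> s k j = 0.

Lemma vanish_below_fmul s t m1 m2 :
  vanish_below s m1 -> vanish_below t m2 -> vanish_below (fmul s t) (m1 + m2).
Proof.
move=> hs ht k j hk; apply: fmul_eq0 => p q.
have [h|h] := ltP p m1; first by rewrite hs ?mul0r.
by rewrite ht ?mulr0 //; lia.
Qed.

Lemma vanish_below_Eop kappa beta s m :
  vanish_below s m -> vanish_below (Eop kappa beta s) (m - 2).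
Proof. by move=> hs k j h; rewrite /Eop !hs ?mulr0 ?addr0 //; lia. Qed.

Definition cone_support s c := forall k j, k + c < `|j| -> s k j = 0.

Lemma cone_support_fmul s t c1 c2 :
  cone_support s c1 -> cone_support t c2 -> cone_support (fmul s t) (c1 + c2).
Proof.
move=> hs ht k j hk; apply: fmul_eq0 => p q.
have [h|h] := ltP (p + c1) `|q|; first by rewrite hs ?mul0r.
by rewrite ht ?mulr0 //; lia.
Qed.

Lemma cone_support_Eop kappa beta s c :
  cone_support s c -> cone_support (Eop kappa beta s) (c + 2).
Proof. by move=> hs k j h; rewrite /Eop !hs ?mulr0 ?addr0 //; lia. Qed.

Definition agree_upto s s' m := forall p q, p <= m -> s p q = s' p q.

Lemma agree_upto_Eop kappa beta s s' m :
  agree_upto s s' m -> agree_upto (Eop kappa beta s) (Eop kappa beta s') (m - 2).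
Proof. by move=> H p q hp; rewrite /Eop !H //; lia. Qed.

Lemma agree_upto_fmul s s' t t' m :
  agree_upto s s' m -> agree_upto t t' m ->
  vanish_below s 0 -> vanish_below s' 0 -> vanish_below t 0 -> vanish_below t' 0 ->
  agree_upto (fmul s t) (fmul s' t') m.
Proof.
move=> hs ht ls ls' lt lt' k j hk.
rewrite /fmul; apply: eq_bigr => p _; apply: eq_bigr => q _.
set a := p%:Z - bandL; set b := q%:Z - (`|k| + 2 * bandL).
have [h1|h1] := ltP a 0; first by rewrite ls ?ls' ?mul0r.
have [h2|h2] := ltP k a; first by rewrite lt ?lt' ?mulr0 //; lia.
by rewrite hs ?ht //; lia.
Qed.

End SeriesAlgebra.

Section Jet.
Variable R : rcfType.
Local Notation C := R[i].
Local Notation series := (fseries R).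
Variables c11 c1N c22 c20 c2N : C.

Definition jet2 : series := fun k j =>
  match k, j with
  | Posz 0, Posz 0 => 1
  | Posz 1, Posz 1 => c11
  | Posz 1, Negz 0 => c1N
  | Posz 2, Posz 2 => c22
  | Posz 2, Posz 0 => c20
  | Posz 2, Negz 1 => c2N
  | _, _ => 0
  end.

Lemma jet2_out p q :
  ~~ ((p \in [:: 0; 1; 2]) && (q \in [:: -2; -1; 0; 1; 2])) -> jet2 p q = 0.
Proof. by rewrite !inE; case: p => [[|[|[|p]]]|p]; case: q => [[|[|[|q]]]|[|[|q]]]. Qed.

Lemma vanish_below_jet2 : vanish_below jet2 0.
Proof. by case=> [k|k] j. Qed.

Lemma cone_support_jet2 : cone_support jet2 0.
Proof.
by case=> [[|[|[|k]]]|k] [[|[|[|j]]]|[|[|j]]] //=; rewrite addr0; lia.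
Qed.

Lemma fmul_jet2l t k j :
  -6 <= k ->
  fmul jet2 t k j =
    t k j + c11 * t (k - 1) (j - 1) + c1N * t (k - 1) (j + 1)
    + c22 * t (k - 2) (j - 2) + c20 * t (k - 2) j + c2N * t (k - 2) (j + 2).
Proof.
move=> hk; rewrite (@fmul_boxl _ _ _ _ _ [:: 0; 1; 2] [:: -2; -1; 0; 1; 2]) //=.
- by rewrite !big_cons !big_nil /= !subr0 !opprK; ring.
- lia.
- lia.
- by move=> p q /jet2_out ->; rewrite mul0r.
Qed.

Lemma fmul_jet2r t k j :
  -6 <= k -> `|j| + 2 <= `|k| + 16 ->
  fmul t jet2 k j =
    t k j + c11 * t (k - 1) (j - 1) + c1N * t (k - 1) (j + 1)
    + c22 * t (k - 2) (j - 2) + c20 * t (k - 2) j + c2N * t (k - 2) (j + 2).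
Proof.
move=> hk hj; rewrite (@fmul_boxr _ _ _ _ _ [:: 0; 1; 2] [:: -2; -1; 0; 1; 2]) //=.
- by rewrite !big_cons !big_nil /= !subr0 !opprK; ring.
- lia.
- lia.
- by move=> p q /jet2_out ->; rewrite mulr0.
Qed.

End Jet.

Section Residual.
Variable R : rcfType.
Local Notation C := R[i].
Local Notation series := (fseries R).
Variables (a : C) (beta : R) (kappa : C).
Local Notation E := (Eop kappa beta).

Definition residual (s : series) (k j : int) : C :=
  (fmul s (E (E s)) (k - 4) j - fmul (E s) (E s) (k - 4) j)
  + 4 * (beta ^+ 2)%:C * (fmul (fmul s s) s k j - (if (k == 0) && (j == 0) then 1 else 0))
  - 4 * a * beta%:C * s (k - 2) j.

(* The part of [residual (fadd e o)] that is linear in [o]. *)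
Definition residual_lin (e o : series) (k j : int) : C :=
  fmul e (E (E o)) (k - 4) j + fmul o (E (E e)) (k - 4) j
  - fmul (E e) (E o) (k - 4) j - fmul (E o) (E e) (k - 4) j
  + 4 * (beta ^+ 2)%:C * (fmul (fmul e e) o k j + fmul (fmul e o) e k j + fmul (fmul o e) e k j)
  - 4 * a * beta%:C * o (k - 2) j.

(* On odd-parity coefficients the terms even in [o] vanish, and the cubic term
   [o * o * o] vanishes below order [3 m]. *)
Lemma residual_odd (e o : series) m k j :
  even_series e -> odd_series o -> vanish_below o m -> k < 3 * m -> ~~ evenz (k + j) ->
  residual (fadd e o) k j = residual_lin e o k j.
Proof.
move=> he ho hlo hk hkj.
have hEe := Eop_even kappa beta he; have hEo := Eop_odd kappa beta ho.
have hEEe := Eop_even kappa beta hEe; have hEEo := Eop_odd kappa beta hEo.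
have hk4 : ~~ evenz (k - 4 + j) by move: hkj; rewrite /evenz; lia.
rewrite /residual /residual_lin !EopD; do 4 rewrite ?fmulDl ?fmulDr; rewrite !faddE.
rewrite (fmul_even he hEEe hk4) (fmul_odd ho hEEo hk4).
rewrite (fmul_even hEe hEe hk4) (fmul_odd hEo hEo hk4).
rewrite (fmul_even (fmul_even he he) he hkj) (fmul_even (fmul_odd ho ho) he hkj).
rewrite (fmul_odd (fmul_even_odd he ho) ho hkj) (fmul_odd (fmul_odd_even ho he) ho hkj).
rewrite (vanish_below_fmul (vanish_below_fmul hlo hlo) hlo); last by lia.
have -> : ((k == 0) && (j == 0)) = false.
  by apply/negbTE; apply: contra hkj => /andP [/eqP -> /eqP ->].
rewrite (he (k - 2) j); last by move: hkj; rewrite /evenz; lia.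
ring.
Qed.

Lemma residual_even (e o : series) k j :
  even_series e -> odd_series o -> vanish_below e 0 -> vanish_below o 2 -> k < 4 ->
  evenz (k + j) -> residual (fadd e o) k j = residual e k j.
Proof.
move=> he ho le lo hk hkj.
have hEe := Eop_even kappa beta he; have hEo := Eop_odd kappa beta ho.
have hEEe := Eop_even kappa beta hEe; have hEEo := Eop_odd kappa beta hEo.
have lEo := vanish_below_Eop kappa beta lo.
have lEEo := vanish_below_Eop kappa beta lEo.
have hk4 : evenz (k - 4 + j) by move: hkj; rewrite /evenz; lia.
rewrite /residual !EopD; do 4 rewrite ?fmulDl ?fmulDr; rewrite !faddE.
rewrite (fmul_even_odd he hEEo hk4) (fmul_odd_even ho hEEe hk4).
rewrite (fmul_even_odd hEe hEo hk4) (fmul_odd_even hEo hEe hk4).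
rewrite (fmul_even_odd (fmul_even he he) ho hkj) (fmul_odd_even (fmul_even_odd he ho) he hkj).
rewrite (fmul_odd_even (fmul_odd_even ho he) he hkj).
rewrite (vanish_below_fmul lo lEEo); last by lia.
rewrite (vanish_below_fmul lEo lEo); last by lia.
rewrite (vanish_below_fmul (vanish_below_fmul le lo) lo); last by lia.
rewrite (vanish_below_fmul (vanish_below_fmul lo le) lo); last by lia.
rewrite (vanish_below_fmul (vanish_below_fmul lo lo) le); last by lia.
rewrite (vanish_below_fmul (vanish_below_fmul lo lo) lo); last by lia.
rewrite (lo (k - 2) j); last by lia.
ring.
Qed.

Lemma residual_agree (e e' : series) k j :
  vanish_below e 0 -> vanish_below e' 0 -> agree_upto e e' 2 -> k <= 2 ->
  residual e k j = residual e' k j.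
Proof.
move=> le le' ag hk.
have aE := agree_upto_Eop kappa beta ag; have aEE := agree_upto_Eop kappa beta aE.
have lEe := vanish_below_Eop kappa beta le; have lEe' := vanish_below_Eop kappa beta le'.
have lEEe' := vanish_below_Eop kappa beta lEe'.
rewrite /residual; congr (_ - _ + _ * (_ - _) - _ * _).
- rewrite (@eq_fmulr _ e _ (E (E e'))); last first.
    move=> p q; have [h|h] := ltP p 0; first by right; apply: le.
    by left; apply: aEE; lia.
  apply: eq_fmull => p q; have [h|h] := lerP p 2; first by left; apply: ag.
  by right; apply: lEEe'; lia.
- rewrite (@eq_fmulr _ (E e) _ (E e')); last first.
    move=> p q; have [h|h] := ltP p (0 - 2); first by right; apply: lEe.
    by left; apply: aE; lia.
  apply: eq_fmull => p q; have [h|h] := lerP p 0; first by left; apply: aE; lia.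
  by right; apply: lEe'; lia.
- rewrite (@eq_fmulr _ (fmul e e) e e'); last first.
    move=> p q; have [h|h] := ltP p (0 + 0).
      by right; apply: (vanish_below_fmul le le).
    by left; apply: ag; lia.
  apply: eq_fmull => p q; have [h|h] := lerP p 2.
    by left; apply: (agree_upto_fmul ag ag le le' le le').
  by right; apply: le'; lia.
- by apply: ag; lia.
Qed.

Lemma residual_lin_agree (e e' o : series) (n K j : int) :
  vanish_below e 0 -> vanish_below e' 0 -> agree_upto e e' 2 -> vanish_below o n ->
  K <= n + 2 -> residual_lin e o K j = residual_lin e' o K j.
Proof.
move=> le le' ag lo hK.
have lEo := vanish_below_Eop kappa beta lo; have lEEo := vanish_below_Eop kappa beta lEo.
have aE := agree_upto_Eop kappa beta ag; have aEE := agree_upto_Eop kappa beta aE.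
have leo : vanish_below (fmul e o) (0 + n) by apply: vanish_below_fmul.
have loe : vanish_below (fmul o e) (n + 0) by apply: vanish_below_fmul.
rewrite /residual_lin; congr (_ + _ - _ - _ + _ * (_ + _ + _) - _).
- apply: eq_fmull => p q; have [h|h] := lerP p 2; first by left; apply: ag.
  by right; apply: lEEo; lia.
- apply: eq_fmulr => p q; have [h|h] := ltP p n; first by right; apply: lo.
  by left; apply: aEE; lia.
- apply: eq_fmull => p q; have [h|h] := lerP p 0; first by left; apply: aE; lia.
  by right; apply: lEo; lia.
- apply: eq_fmulr => p q; have [h|h] := ltP p (n - 2); first by right; apply: lEo.
  by left; apply: aE; lia.
- apply: eq_fmull => p q; have [h|h] := lerP p 2.
    by left; apply: (agree_upto_fmul ag ag le le' le le').
  by right; apply: lo; lia.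
- rewrite (@eq_fmulr _ _ e e'); last first.
    move=> p q; have [h|h] := ltP p n; first by right; apply: leo; lia.
    by left; apply: ag; lia.
  apply: eq_fmull => p q; have [h|h] := ltP (K - p) 0; first by right; apply: le'.
  left; apply: eq_fmull => p' q'; have [h'|h'] := lerP p' 2; first by left; apply: ag.
  by right; apply: lo; lia.
- rewrite (@eq_fmulr _ _ e e'); last first.
    move=> p q; have [h|h] := ltP p n; first by right; apply: loe; lia.
    by left; apply: ag; lia.
  apply: eq_fmull => p q; have [h|h] := ltP (K - p) 0; first by right; apply: le'.
  left; apply: eq_fmulr => p' q'; have [h'|h'] := ltP p' n; first by right; apply: lo.
  by left; apply: ag; lia.
Qed.

End Residual.

Lemma sqr_beta_Theta2 (R : rcfType) (beta : R) :
  (beta ^+ 2)%:C = - (('i * Theta2 beta) ^+ 2) / 27.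
Proof.
rewrite exprMn sqr_i mulN1r opprK /Theta2 -rmorphXn.
have -> : ((3 * Num.sqrt 3 * beta) ^+ 2 : R) = 27 * beta ^+ 2.
  by rewrite !exprMn sqr_sqrtr ?ler0n //; ring.
by rewrite !rmorphM rmorph_nat; field.
Qed.

Section Offsets.
Variable R : rcfType.
Local Notation C := R[i].
Local Notation series := (fseries R).
Variables (kappa : C) (beta : R) (c11 c1N c22 c20 c2N : C).
Local Notation E := (Eop kappa beta).
Local Notation J := (jet2 c11 c1N c22 c20 c2N).

(* Coefficients are addressed relative to a base point [(K, j0)], so that after
   expanding all products every term reads [at_offset o K j0 c d] with numerals
   [c] and [d]; the tables [window*] below then evaluate these by computation. *)
Definition at_offset (s : series) (K j0 c d : int) : C := s (K - c) (j0 - d).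

Lemma at_offset_Eop s K j0 c d :
  at_offset (E s) K j0 c d =
   (1 / 3 - (K - c)%:~R / 3 + 2 * kappa * (j0 - d)%:~R / 3) * at_offset s K j0 c d
   + (2 * 'i * Theta2 beta * (j0 - d)%:~R / 3) * at_offset s K j0 (c - 2) d.
Proof. by rewrite /at_offset /Eop; have -> : K - c + 2 = K - (c - 2) by ring. Qed.

Lemma at_offset_fmul_jet2l t K j0 c d :
  -6 <= K - c ->
  at_offset (fmul J t) K j0 c d =
    at_offset t K j0 c d + c11 * at_offset t K j0 (c + 1) (d + 1)
    + c1N * at_offset t K j0 (c + 1) (d - 1) + c22 * at_offset t K j0 (c + 2) (d + 2)
    + c20 * at_offset t K j0 (c + 2) d + c2N * at_offset t K j0 (c + 2) (d - 2).
Proof.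
by move=> h; rewrite /at_offset fmul_jet2l // !opprD !addrA !opprK.
Qed.

Lemma at_offset_fmul_jet2r t K j0 c d :
  -6 <= K - c -> `|j0 - d| + 2 <= `|K - c| + 16 ->
  at_offset (fmul t J) K j0 c d =
    at_offset t K j0 c d + c11 * at_offset t K j0 (c + 1) (d + 1)
    + c1N * at_offset t K j0 (c + 1) (d - 1) + c22 * at_offset t K j0 (c + 2) (d + 2)
    + c20 * at_offset t K j0 (c + 2) d + c2N * at_offset t K j0 (c + 2) (d - 2).
Proof.
by move=> h h'; rewrite /at_offset fmul_jet2r // !opprD !addrA !opprK.
Qed.

Section Boxes.
Variables (o : series) (n K j0 c d : int).
Hypotheses (lo : vanish_below o n) (hn : 2 <= n).

Let lJ := vanish_below_jet2 c11 c1N c22 c20 c2N.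
Let cJ := cone_support_jet2 c11 c1N c22 c20 c2N.

Lemma at_offset_fmul_EEjet2 :
  n <= K - c + 4 <= n + 2 -> `|j0 - d| <= K - c + 4 ->
  at_offset (fmul o (E (E J))) K j0 c d =
  \sum_(a <- [:: -4; -3; -2]) \sum_(b <- [:: -2; -1; 0; 1; 2])
     at_offset o K j0 (c + a) (d + b) * E (E J) a b.
Proof.
move=> hK hj; have lEEJ := vanish_below_Eop kappa beta (vanish_below_Eop kappa beta lJ).
have cEEJ := cone_support_Eop kappa beta (cone_support_Eop kappa beta cJ).
rewrite /at_offset (@fmul_boxr _ _ _ _ _ [:: -4; -3; -2] [:: -2; -1; 0; 1; 2]) //=.
- by apply: eq_bigr => a _; apply: eq_bigr => b _; rewrite !opprD !addrA.
- lia.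
- lia.
move=> p q; rewrite !inE => H.
have [?|?] := ltP p n; first by rewrite lo ?mul0r //.
have [?|?] := ltP (K - c - p) (-4); first by rewrite lEEJ ?mulr0.
by rewrite cEEJ ?mulr0 //; lia.
Qed.

Lemma at_offset_fmul_Ejet2_E :
  n <= K - c + 4 <= n + 2 -> `|j0 - d| <= K - c + 4 ->
  at_offset (fmul (E J) (E o)) K j0 c d =
  \sum_(a <- [:: -2; -1; 0]) \sum_(b <- [:: -2; -1; 0; 1; 2])
     E J a b * at_offset (E o) K j0 (c + a) (d + b).
Proof.
move=> hK hj; have lEJ := vanish_below_Eop kappa beta lJ.
have cEJ := cone_support_Eop kappa beta cJ; have lEo := vanish_below_Eop kappa beta lo.
rewrite /at_offset (@fmul_boxl _ _ _ _ _ [:: -2; -1; 0] [:: -2; -1; 0; 1; 2]) //=.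
- by apply: eq_bigr => a _; apply: eq_bigr => b _; rewrite !opprD !addrA.
- lia.
- lia.
move=> p q; rewrite !inE => H.
have [?|?] := ltP p (-2); first by rewrite lEJ ?mul0r.
have [?|?] := ltP 0 p; first by rewrite lEo ?mulr0 //; lia.
by rewrite cEJ ?mul0r //; lia.
Qed.

Lemma at_offset_fmul_E_Ejet2 :
  n <= K - c + 4 <= n + 2 -> `|j0 - d| <= K - c + 4 ->
  at_offset (fmul (E o) (E J)) K j0 c d =
  \sum_(a <- [:: -2; -1; 0]) \sum_(b <- [:: -2; -1; 0; 1; 2])
     at_offset (E o) K j0 (c + a) (d + b) * E J a b.
Proof.
move=> hK hj; have lEJ := vanish_below_Eop kappa beta lJ.
have cEJ := cone_support_Eop kappa beta cJ; have lEo := vanish_below_Eop kappa beta lo.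
rewrite /at_offset (@fmul_boxr _ _ _ _ _ [:: -2; -1; 0] [:: -2; -1; 0; 1; 2]) //=.
- by apply: eq_bigr => a _; apply: eq_bigr => b _; rewrite !opprD !addrA.
- lia.
- lia.
move=> p q; rewrite !inE => H.
have [?|?] := ltP p (n - 2); first by rewrite lEo ?mul0r.
have [?|?] := ltP (K - c - p) (-2); first by rewrite lEJ ?mulr0.
by rewrite cEJ ?mulr0 //; lia.
Qed.

Lemma at_offset_fmul_sqr_jet2 :
  n <= K - c <= n + 2 -> `|j0 - d| <= K - c ->
  at_offset (fmul (fmul J J) o) K j0 c d =
  \sum_(a <- [:: 0; 1; 2]) \sum_(b <- [:: -2; -1; 0; 1; 2])
     fmul J J a b * at_offset o K j0 (c + a) (d + b).
Proof.
move=> hK hj; have lJJ := vanish_below_fmul lJ lJ; have cJJ := cone_support_fmul cJ cJ.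
rewrite /at_offset (@fmul_boxl _ _ _ _ _ [:: 0; 1; 2] [:: -2; -1; 0; 1; 2]) //=.
- by apply: eq_bigr => a _; apply: eq_bigr => b _; rewrite !opprD !addrA.
- lia.
- lia.
move=> p q; rewrite !inE => H.
have [?|?] := ltP p 0; first by rewrite lJJ ?mul0r.
have [?|?] := ltP 2 p; first by rewrite lo ?mulr0 //; lia.
by rewrite cJJ ?mul0r //; lia.
Qed.

End Boxes.

End Offsets.

Section Windows.
Variable R : rcfType.
Local Notation series := (fseries R).
Variables (o : series) (n j0 : int).
Hypothesis lo : vanish_below o n.

Definition window0 (c d : int) :=
  match c, d with
  | Posz 0, Posz 0 => o n j0
  | Posz 0, _ | Negz _, _ => at_offset o n j0 c d
  | _, _ => 0
  end.

Lemma at_offset_window0 : at_offset o n j0 = window0.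
Proof.
apply: functional_extensionality => c; apply: functional_extensionality => d.
case: c => [[|c]|c] //=; first by case: d => [[|d]|d] //=; rewrite /at_offset !subr0.
by rewrite /at_offset lo //; lia.
Qed.

Hypothesis top_pm1 : forall j, j <> 1 -> j <> -1 -> o n j = 0.

Definition window1 (c d : int) :=
  match c, d with
  | Posz 0, Posz 0 => o (n + 1) j0
  | Posz 0, _ | Negz _, _ => at_offset o (n + 1) j0 c d
  | Posz 1, _ => if d == j0 - 1 then o n 1 else if d == j0 + 1 then o n (-1) else 0
  | _, _ => 0
  end.

Lemma at_offset_window1 : at_offset o (n + 1) j0 = window1.
Proof.
apply: functional_extensionality => c; apply: functional_extensionality => d.
case: c => [[|[|c]]|c] //=; rewrite /at_offset.
- by case: d => [[|d]|d] //=; rewrite !subr0.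
- case: eqP => h1; first by congr (o _ _); lia.
  case: eqP => h2; first by congr (o _ _); lia.
  by rewrite addrK; apply: top_pm1; lia.
- by rewrite lo //; lia.
Qed.

Definition window2 (c d : int) :=
  match c with
  | Posz 0 => if d == 0 then o (n + 2) j0 else if d == 2 * j0 then o (n + 2) (- j0)
              else at_offset o (n + 2) j0 c d
  | Posz 1 => if d == j0 then o (n + 1) 0 else if d == j0 - 2 then o (n + 1) 2
              else if d == j0 + 2 then o (n + 1) (-2) else at_offset o (n + 2) j0 c d
  | Posz 2 => if d == j0 - 1 then o n 1 else if d == j0 + 1 then o n (-1) else 0
  | Posz _ => 0
  | Negz _ => at_offset o (n + 2) j0 c d
  end.

Lemma at_offset_window2 : at_offset o (n + 2) j0 = window2.
Proof.
apply: functional_extensionality => c; apply: functional_extensionality => d.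
case: c => [[|[|[|c]]]|c] //=; rewrite /at_offset.
- case: eqP => h1; first by congr (o _ _); lia.
  by case: eqP => h2 //; congr (o _ _); lia.
- case: eqP => h1; first by congr (o _ _); lia.
  case: eqP => h2; first by congr (o _ _); lia.
  by case: eqP => h3 //; congr (o _ _); lia.
- case: eqP => h1; first by congr (o _ _); lia.
  case: eqP => h2; first by congr (o _ _); lia.
  by rewrite addrK; apply: top_pm1; lia.
- by rewrite lo //; lia.
Qed.

End Windows.

Section LinearizedResidual.
Variable R : rcfType.
Local Notation C := R[i].
Local Notation series := (fseries R).
Variables (a : C) (beta : R) (kappa : C) (c11 c1N c22 c20 c2N : C).
Local Notation E := (Eop kappa beta).
Local Notation J := (jet2 c11 c1N c22 c20 c2N).
Local Notation u := ('i * Theta2 beta).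

Lemma residual_lin_at_offset (e o : series) K j0 :
  residual_lin a beta kappa e o K j0 =
  at_offset (fmul e (E (E o))) K j0 4 0 + at_offset (fmul o (E (E e))) K j0 4 0
  - at_offset (fmul (E e) (E o)) K j0 4 0 - at_offset (fmul (E o) (E e)) K j0 4 0
  + 4 * (beta ^+ 2)%:C * (at_offset (fmul (fmul e e) o) K j0 0 0
      + at_offset (fmul (fmul e o) e) K j0 0 0 + at_offset (fmul (fmul o e) e) K j0 0 0)
  - 4 * a * beta%:C * at_offset o K j0 2 0.
Proof. by rewrite /residual_lin /at_offset !subr0. Qed.

Ltac expand_residual_lin lo hn :=
  rewrite residual_lin_at_offset;
  rewrite (at_offset_fmul_EEjet2 kappa beta _ _ _ _ _ lo hn); [ | lia | lia];
  rewrite (at_offset_fmul_Ejet2_E kappa beta _ _ _ _ _ lo hn); [ | lia | lia];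
  rewrite (at_offset_fmul_E_Ejet2 kappa beta _ _ _ _ _ lo hn); [ | lia | lia];
  rewrite (at_offset_fmul_sqr_jet2 _ _ _ _ _ lo hn); [ | lia | lia];
  rewrite !big_cons !big_nil;
  rewrite !at_offset_fmul_jet2r; [ | (match goal with |- is_true (_ <= _) => lia end) ..];
  rewrite !at_offset_fmul_jet2l; [ | (match goal with |- is_true (_ <= _) => lia end) ..];
  rewrite !fmul_jet2l; [ | (match goal with |- is_true (_ <= _) => lia end) ..];
  rewrite !at_offset_Eop /Eop; simpl jet2.

Section Order.
Variables (o : series) (n : int).
Hypotheses (hn : 2 <= n) (lo : vanish_below o n).

Lemma residual_lin_lead j :
  `|j| <= n -> residual_lin a beta kappa J o n j = 4 * u ^+ 2 / 9 * (j%:~R ^+ 2 - 1) * o n j.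
Proof.
move=> hj; expand_residual_lin lo hn.
rewrite (at_offset_window0 j lo) /= sqr_beta_Theta2.
by field.
Qed.

Hypothesis top_pm1 : forall j, j <> 1 -> j <> -1 -> o n j = 0.

Lemma residual_lin_succ_0 :
  residual_lin a beta kappa J o (n + 1) 0 =
  - 4 * u ^+ 2 / 9 * o (n + 1) 0 + 8 * u ^+ 2 / 9 * (c11 * o n (-1) + c1N * o n 1).
Proof.
expand_residual_lin lo hn.
rewrite (at_offset_window1 0 lo top_pm1) /= sqr_beta_Theta2.
by field.
Qed.

Lemma residual_lin_succ_2 :
  residual_lin a beta kappa J o (n + 1) 2 =
  4 * u ^+ 2 / 3 * o (n + 1) 2 - 8 * u ^+ 2 / 9 * c11 * o n 1.
Proof.
expand_residual_lin lo hn.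
rewrite (at_offset_window1 2 lo top_pm1) /= sqr_beta_Theta2.
by field.
Qed.

Lemma residual_lin_succ_N2 :
  residual_lin a beta kappa J o (n + 1) (-2) =
  4 * u ^+ 2 / 3 * o (n + 1) (-2) - 8 * u ^+ 2 / 9 * c1N * o n (-1).
Proof.
expand_residual_lin lo hn.
rewrite (at_offset_window1 (-2) lo top_pm1) /= sqr_beta_Theta2.
by field.
Qed.

Lemma residual_lin_succ2_1 :
  residual_lin a beta kappa J o (n + 2) 1 =
  12 * (- u ^+ 2 / 27) * (o n 1 * (2 * c11 * c1N + c20) + o n (-1) * (c11 ^+ 2 - 7 * c22)
      + c11 * o (n + 1) 0 - 7 * c1N * o (n + 1) 2)
   - 4 * a * beta%:C * o n 1 + 2 * u / 9 * (4 * kappa - 2 * n%:~R + 2) * o n 1.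
Proof.
expand_residual_lin lo hn.
rewrite (at_offset_window2 1 lo top_pm1) /= sqr_beta_Theta2.
by field.
Qed.

Lemma residual_lin_succ2_N1 :
  residual_lin a beta kappa J o (n + 2) (-1) =
  12 * (- u ^+ 2 / 27) * (o n (-1) * (2 * c11 * c1N + c20) + o n 1 * (c1N ^+ 2 - 7 * c2N)
      + c1N * o (n + 1) 0 - 7 * c11 * o (n + 1) (-2))
   - 4 * a * beta%:C * o n (-1) + 2 * u / 9 * (2 * n%:~R - 2 + 4 * kappa) * o n (-1).
Proof.
expand_residual_lin lo hn.
rewrite (at_offset_window2 (-1) lo top_pm1) /= sqr_beta_Theta2.
by field.
Qed.

End Order.

End LinearizedResidual.

Section JetResidual.
Variable R : rcfType.
Local Notation C := R[i].
Variables (a : C) (beta : R) (kappa : C) (c11 c1N c22 c20 c2N : C).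
Local Notation E := (Eop kappa beta).
Local Notation J := (jet2 c11 c1N c22 c20 c2N).
Local Notation u := ('i * Theta2 beta).

Lemma fmul_Ejet2_Ejet2 j :
  `|j| <= 2 ->
  fmul (E J) (E J) (-2) j =
  \sum_(p <- [:: -2; -1; 0]) \sum_(q <- [:: -2; -1; 0; 1; 2]) E J p q * E J (-2 - p) (j - q).
Proof.
move=> hj; have lEJ := vanish_below_Eop kappa beta (vanish_below_jet2 c11 c1N c22 c20 c2N).
have cEJ := cone_support_Eop kappa beta (cone_support_jet2 c11 c1N c22 c20 c2N).
apply: fmul_boxl => //=; try lia.
move=> p q; rewrite !inE => H.
have [?|?] := ltP p (-2); first by rewrite lEJ ?mul0r.
have [?|?] := ltP 0 p; first by rewrite [X in _ * X]lEJ ?mulr0 //; lia.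
by rewrite cEJ ?mul0r //; lia.
Qed.

Ltac expand_residual_jet2 :=
  rewrite /residual fmul_jet2l; last (by lia);
  rewrite fmul_Ejet2_Ejet2; last (by lia);
  rewrite fmul_jet2r; [ | lia | lia];
  rewrite !fmul_jet2l; [ | (match goal with |- is_true (_ <= _) => lia end) ..];
  rewrite !big_cons !big_nil /Eop; simpl jet2.

Lemma residual_jet2_22 : residual a beta kappa J 2 2 = 4 * u ^+ 2 / 9 * (3 * c22 - c11 ^+ 2).
Proof. by expand_residual_jet2; rewrite sqr_beta_Theta2 /=; field. Qed.

Lemma residual_jet2_2N2 :
  residual a beta kappa J 2 (-2) = 4 * u ^+ 2 / 9 * (3 * c2N - c1N ^+ 2).
Proof. by expand_residual_jet2; rewrite sqr_beta_Theta2 /=; field. Qed.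

Lemma residual_jet2_20 :
  residual a beta kappa J 2 0 = 4 * u ^+ 2 / 9 * (2 * c11 * c1N - c20) - 4 * a * beta%:C.
Proof. by expand_residual_jet2; rewrite sqr_beta_Theta2 /=; field. Qed.

End JetResidual.

Lemma eq_of_subr_mul0 (F : fieldType) (x y c l : F) : l = 0 -> x - y = c * l -> x = y.
Proof. by move=> hl h; apply/eqP; rewrite -subr_eq0 h hl mulr0. Qed.

Lemma linear_system2_eq0 (F : fieldType) (m11 m12 m21 m22 x y : F) :
  m11 * m22 - m12 * m21 != 0 ->
  m11 * x + m12 * y = 0 -> m21 * x + m22 * y = 0 -> x = 0 /\ y = 0.
Proof.
move=> hdet e1 e2.
have hx : (m11 * m22 - m12 * m21) * x = 0.
  have -> : (m11 * m22 - m12 * m21) * x = m22 * (m11 * x + m12 * y) - m12 * (m21 * x + m22 * y).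
    by ring.
  by rewrite e1 e2 !mulr0 subrr.
have hy : (m11 * m22 - m12 * m21) * y = 0.
  have -> : (m11 * m22 - m12 * m21) * y = m11 * (m21 * x + m22 * y) - m21 * (m11 * x + m12 * y).
    by ring.
  by rewrite e1 e2 !mulr0 subrr.
by move/eqP: hx; move/eqP: hy; rewrite !mulf_eq0 (negbTE hdet) /= => /eqP -> /eqP ->.
Qed.

(* The equations for the odd coefficients at orders [n + 1] and [n + 2], after
   eliminating the order-2 and order-[n + 1] unknowns, form a 2x2 system in
   [X1 = o n 1], [XN1 = o n (-1)] of determinant [- (16/81) u^2 (n - 1)^2]. *)
Lemma lead_pm1_system_eq0 (R : rcfType)
    (u c11 c1N c22 c20 c2N kappa a B X1 XN1 Y0 Y2 YN2 : R[i]) (n : int) :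
  u != 0 -> 2 <= n ->
  u * c11 * c1N = 3 * kappa ->
  4 * u ^+ 2 / 9 * (3 * c22 - c11 ^+ 2) = 0 ->
  4 * u ^+ 2 / 9 * (3 * c2N - c1N ^+ 2) = 0 ->
  4 * u ^+ 2 / 9 * (2 * c11 * c1N - c20) - 4 * a * B = 0 ->
  - 4 * u ^+ 2 / 9 * Y0 + 8 * u ^+ 2 / 9 * (c11 * XN1 + c1N * X1) = 0 ->
  4 * u ^+ 2 / 3 * Y2 - 8 * u ^+ 2 / 9 * c11 * X1 = 0 ->
  4 * u ^+ 2 / 3 * YN2 - 8 * u ^+ 2 / 9 * c1N * XN1 = 0 ->
  12 * (- u ^+ 2 / 27) * (X1 * (2 * c11 * c1N + c20) + XN1 * (c11 ^+ 2 - 7 * c22)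
      + c11 * Y0 - 7 * c1N * Y2)
    - 4 * a * B * X1 + 2 * u / 9 * (4 * kappa - 2 * n%:~R + 2) * X1 = 0 ->
  12 * (- u ^+ 2 / 27) * (XN1 * (2 * c11 * c1N + c20) + X1 * (c1N ^+ 2 - 7 * c2N)
      + c1N * Y0 - 7 * c11 * YN2)
    - 4 * a * B * XN1 + 2 * u / 9 * (2 * n%:~R - 2 + 4 * kappa) * XN1 = 0 ->
  X1 = 0 /\ XN1 = 0.
Proof.
move=> hu hn hk H22 H2N2 H20 HY0 HY2 HYN2 E1 EN1.
have hkappa : kappa = u * c11 * c1N / 3.
  by apply: (eq_of_subr_mul0 (l := u * c11 * c1N - 3 * kappa) (c := -1/3));
    [rewrite hk subrr | field].
have hc22 : c22 = c11 ^+ 2 / 3.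
  by apply: (eq_of_subr_mul0 H22 (c := 9 / (12 * u ^+ 2))); field.
have hc2N : c2N = c1N ^+ 2 / 3.
  by apply: (eq_of_subr_mul0 H2N2 (c := 9 / (12 * u ^+ 2))); field.
have hc20 : c20 = 2 * c11 * c1N - 9 * a * B / u ^+ 2.
  by apply: (eq_of_subr_mul0 H20 (c := - 9 / (4 * u ^+ 2))); field.
have hY0 : Y0 = 2 * (c11 * XN1 + c1N * X1).
  by apply: (eq_of_subr_mul0 HY0 (c := - 9 / (4 * u ^+ 2))); field.
have hY2 : Y2 = 2 / 3 * c11 * X1.
  by apply: (eq_of_subr_mul0 HY2 (c := 3 / (4 * u ^+ 2))); field.
have hYN2 : YN2 = 2 / 3 * c1N * XN1.
  by apply: (eq_of_subr_mul0 HYN2 (c := 3 / (4 * u ^+ 2))); field.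
subst kappa c22 c2N c20 Y0 Y2 YN2.
set D := 4 * u / 9 * (n%:~R - 1); set A := - (8 / 27) * u ^+ 2 * c11 * c1N.
apply: (@linear_system2_eq0 _ (A - D) (- (8 / 27) * u ^+ 2 * c11 ^+ 2)
                               (- (8 / 27) * u ^+ 2 * c1N ^+ 2) (A + D)).
- have -> : (A - D) * (A + D) - - (8 / 27) * u ^+ 2 * c11 ^+ 2 * (- (8 / 27) * u ^+ 2 * c1N ^+ 2)
           = - D ^+ 2 by rewrite /A; ring.
  have hn1 : (n%:~R - 1 : R[i]) != 0 by rewrite -[1]/(1%:~R) -intrB intr_eq0; lia.
  by rewrite oppr_eq0 expf_neq0 // /D !mulf_neq0 // ?invr_eq0 pnatr_eq0.
- by apply: (eq_of_subr_mul0 E1 (c := 1)); rewrite /A /D; field.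
- by apply: (eq_of_subr_mul0 EN1 (c := 1)); rewrite /A /D; field.
Qed.

Lemma iTheta2_neq0 (R : rcfType) (beta : R) : beta != 0 -> 'i * Theta2 beta != 0.
Proof.
move=> hbeta; rewrite mulf_neq0 ?eq_complex /= ?oner_eq0 ?andbF // negb_and eqxx orbF.
by rewrite !mulf_neq0 // ?pnatr_eq0 // sqrtr_eq0 -ltNge ltr0n.
Qed.

Lemma vanish_below_vser (R : rcfType) (coef : nat -> int -> R[i]) :
  vanish_below (vser coef) 0.
Proof. by case. Qed.

Lemma cone_support_vser (R : rcfType) (coef : nat -> int -> R[i]) :
  (forall (k : nat) (j : int), k%:Z < `|j| -> coef k j = 0) -> cone_support (vser coef) 0.
Proof. by move=> hsupp [k|k] j; rewrite addr0 //= => /hsupp. Qed.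

Section OddCoefficients.
Variable R : rcfType.
Local Notation C := R[i].
Variables (a : C) (beta : R) (kappa : C) (coef : nat -> int -> C).
Hypotheses (hbeta : beta != 0)
  (hsupp : forall (k : nat) (j : int), k%:Z < `|j| -> coef k j = 0)
  (h00 : coef 0%N 0 = 1) (h10 : coef 1%N 0 = 0)
  (hpq : Theta2 beta * coef 1%N 1 * coef 1%N (-1) = - (3 * 'i * kappa))
  (hsol : formal_solution a beta kappa coef).

Local Notation v := (vser coef).
Local Notation e := (even_part v).
Local Notation o := (odd_part v).
Local Notation J := (jet2 (coef 1%N 1) (coef 1%N (-1)) (coef 2%N 2) (coef 2%N 0) (coef 2%N (-2))).
Local Notation u := ('i * Theta2 beta).

Let cv := cone_support_vser hsupp.

Lemma iTheta2_c11_c1N : u * coef 1%N 1 * coef 1%N (-1) = 3 * kappa.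
Proof.
transitivity ('i * (Theta2 beta * coef 1%N 1 * coef 1%N (-1))); first by ring.
rewrite hpq; have -> : 'i * - (3 * 'i * kappa) = - 3 * 'i ^+ 2 * kappa :> C by ring.
by rewrite sqr_i; ring.
Qed.

Lemma vanish_below_even_part : vanish_below e 0.
Proof. by move=> k j h; rewrite /even_part vanish_below_vser // if_same. Qed.

Lemma vanish_below_odd_part2 : vanish_below o 2.
Proof.
move=> k j hk; rewrite /odd_part; case: ifP => // hev.
have [h0|h0] := ltP k 0; first exact: vanish_below_vser.
move: hev; have [->|->] : k = 0 \/ k = 1 by lia.
  by move/negbT; rewrite /evenz => hev; apply: cv; lia.
move/negbT; rewrite /evenz => hev.
have [->|hj0] := eqVneq j 0; first by [].
by apply: cv; lia.
Qed.

Lemma even_part_jet2 : agree_upto e J 2.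
Proof.
move=> p q hp.
have [h0|h0] := ltP p 0.
  by rewrite vanish_below_even_part // vanish_below_jet2.
have [h1|h1] := ltP p `|q|.
  have hv : v p q = 0 by apply: cv; lia.
  by rewrite /even_part hv if_same cone_support_jet2 //; lia.
have : p = 0 \/ p = 1 \/ p = 2 by lia.
case=> [|[|]] ?; subst p.
- by have -> : q = 0 by lia.
- by have [->|[->|->]] : q = -1 \/ q = 0 \/ q = 1 by lia.
- by have [->|[->|[->|[->|->]]]] : q = -2 \/ q = -1 \/ q = 0 \/ q = 1 \/ q = 2 by lia.
Qed.

Let le := vanish_below_even_part.
Let lJ := vanish_below_jet2 (coef 1%N 1) (coef 1%N (-1)) (coef 2%N 2) (coef 2%N 0) (coef 2%N (-2)).
Let eJ := even_part_jet2.

Lemma residual_jet2_eq0 j : j = 2 \/ j = 0 \/ j = -2 -> residual a beta kappa J 2 j = 0.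
Proof.
move=> hj; rewrite -(residual_agree a beta kappa j le lJ eJ) //.
rewrite -(residual_even a beta kappa (even_part_even v) (odd_part_odd v) le
                                    vanish_below_odd_part2) //; last by rewrite /evenz; lia.
by rewrite fadd_even_odd_part; apply: hsol.
Qed.

Section Induction.
Variable m : int.
Hypotheses (hm : 2 <= m) (lo : vanish_below o m).

Lemma residual_lin_odd_eq0 K j :
  m <= K <= m + 2 -> ~~ evenz (K + j) -> residual_lin a beta kappa J o K j = 0.
Proof.
move=> hK hKj; rewrite -(residual_lin_agree a beta kappa j le lJ eJ lo) //; last by lia.
rewrite -(residual_odd a beta kappa (even_part_even v) (odd_part_odd v) lo) //; last by lia.
by rewrite fadd_even_odd_part; apply: hsol.
Qed.

Lemma odd_lead_pm1 j : j <> 1 -> j <> -1 -> o m j = 0.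
Proof.
move=> hj1 hjN1.
have [hev|hev] := boolP (evenz (m + j)); first exact: odd_part_odd.
have [hj|hj] := ltP m `|j|; first by rewrite /odd_part (negbTE hev) cv //; lia.
have hK : m <= m <= m + 2 by lia.
have := residual_lin_odd_eq0 hK hev.
rewrite (residual_lin_lead _ _ _ _ _ _ _ _ hm lo hj) => /eqP.
have hj2 : (j%:~R ^+ 2 - 1 : C) != 0.
  by rewrite -[1]/(1%:~R) -rmorphXn -intrB intr_eq0; nia.
have hc : 4 * u ^+ 2 / 9 * (j%:~R ^+ 2 - 1) != 0 :> C.
  apply: mulf_neq0 => //; apply: mulf_neq0; last by rewrite invr_eq0 pnatr_eq0.
  by rewrite mulf_neq0 ?pnatr_eq0 ?expf_neq0 ?iTheta2_neq0.
by rewrite mulf_eq0 (negbTE hc) => /eqP.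
Qed.
Lemma odd_lead_pm1_eq0 : o m 1 = 0 /\ o m (-1) = 0.
Proof.
have [hev|hev] := boolP (evenz (m + 1)).
  by split; apply: odd_part_odd; move: hev; rewrite /evenz; lia.
have top := odd_lead_pm1.
have E10 : residual_lin a beta kappa J o (m + 1) 0 = 0.
  by apply: residual_lin_odd_eq0; move: hev; rewrite /evenz; lia.
have E12 : residual_lin a beta kappa J o (m + 1) 2 = 0.
  by apply: residual_lin_odd_eq0; move: hev; rewrite /evenz; lia.
have E1N2 : residual_lin a beta kappa J o (m + 1) (-2) = 0.
  by apply: residual_lin_odd_eq0; move: hev; rewrite /evenz; lia.
have E21 : residual_lin a beta kappa J o (m + 2) 1 = 0.
  by apply: residual_lin_odd_eq0; move: hev; rewrite /evenz; lia.
have E2N1 : residual_lin a beta kappa J o (m + 2) (-1) = 0.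
  by apply: residual_lin_odd_eq0; move: hev; rewrite /evenz; lia.
rewrite (residual_lin_succ_0 a beta kappa _ _ _ _ _ hm lo top) in E10.
rewrite (residual_lin_succ_2 a beta kappa _ _ _ _ _ hm lo top) in E12.
rewrite (residual_lin_succ_N2 a beta kappa _ _ _ _ _ hm lo top) in E1N2.
rewrite (residual_lin_succ2_1 a beta kappa _ _ _ _ _ hm lo top) in E21.
rewrite (residual_lin_succ2_N1 a beta kappa _ _ _ _ _ hm lo top) in E2N1.
have := residual_jet2_eq0 (or_introl erefl); rewrite residual_jet2_22 => H22.
have := residual_jet2_eq0 (or_intror (or_intror erefl)); rewrite residual_jet2_2N2 => H2N2.
have := residual_jet2_eq0 (or_intror (or_introl erefl)); rewrite residual_jet2_20 => H20.
exact: (lead_pm1_system_eq0 (iTheta2_neq0 hbeta) hm iTheta2_c11_c1N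
          H22 H2N2 H20 E10 E12 E1N2 E21 E2N1).
Qed.

Lemma vanish_below_odd_part_succ : vanish_below o (m + 1).
Proof.
move=> k j hk; have [h|h] := ltP k m; first exact: lo.
have -> : k = m by lia.
have [->|h1] := eqVneq j 1; first by case: odd_lead_pm1_eq0.
have [->|hN1] := eqVneq j (-1); first by case: odd_lead_pm1_eq0.
by apply: odd_lead_pm1; apply/eqP.
Qed.

End Induction.

Lemma vanish_below_odd_part (m : nat) : vanish_below o m.
Proof.
elim: m => [|m IH].
  by move=> k j hk; apply: vanish_below_odd_part2; lia.
have [hm|hm] := leqP m 1.
  by move=> k j hk; apply: vanish_below_odd_part2; lia.
by rewrite -addn1 PoszD; apply: vanish_below_odd_part_succ => //; lia.
Qed.

Lemma coef_odd_eq0 (n : nat) (j : int) : ~~ evenz (n%:Z + j) -> coef n j = 0.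
Proof.
move=> hev; have := @vanish_below_odd_part n.+1 n j.
by rewrite /odd_part (negbTE hev); apply; lia.
Qed.

End OddCoefficients.

Lemma cube_root_neq0 (R : rcfType) (eps b beta : R) :
  (eps = 1 \/ eps = -1) -> b != 0 -> beta ^+ 3 = eps * b -> beta != 0.
Proof.
move=> heps hb hbeta; apply: contraNneq hb => hb0.
move: hbeta; rewrite hb0 expr0n /= => /esym/eqP; rewrite mulf_eq0 => /orP [|/eqP //].
by case: heps => ->; rewrite ?oppr_eq0 oner_eq0.
Qed.

Theorem mainTheorem7 (R : rcfType) (eps : R) (b : R) (a : R[i]) (beta : R)
    (kappa : R[i]) (coef : nat -> int -> R[i]) :
  (eps = 1 \/ eps = -1) ->
  b != 0 ->
  beta ^+ 3 = eps * b ->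
  `|@complex.Re R kappa| < 1 / 2 ->
  (forall (k : nat) (j : int), (k%:Z < `|j|)%R -> coef k j = 0) ->
  coef 0%N 0 = 1 ->
  coef 1%N 0 = 0 ->
  Theta2 beta * coef 1%N 1 * coef 1%N (-1) = - (3 * 'i * kappa) ->
  formal_solution a beta kappa coef ->
  (forall n : nat, coef n (1 - n%:Z) = 0 /\ coef n (n%:Z - 1) = 0) /\
  (forall j : nat, coef (2 * j)%N 1 = 0 /\ coef (2 * j)%N (-1) = 0).
Proof.
(* The bound on [Re kappa] only matters for convergence of the series. *)
move=> heps hb hbeta _ hsupp h00 h10 hpq hsol.
have hodd := coef_odd_eq0 (cube_root_neq0 heps hb hbeta) hsupp h00 h10 hpq hsol.
by split=> n; split; apply: hodd; rewrite /evenz; lia.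
Qed.
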